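(* Assume $d(\eta,\cdot)$ attains its minimum over $\mathcal G$ at $g^*$ (equivalently, by the results on the BF dual, the BF prediction for $b=b^*$, $\epsilon=\vec 0_m$, which is then $g^*$). Then for every $g^{ds}$ in the closure $\mathcal G_{ds}$ of $\mathcal G^\circ_{ds}$ in $\Delta_k^n$, $d(\eta,g^* )\le d(\eta,g^{ds})$.
   Context: Standard setup. Let $n\ge1$, $k\ge2$, $p\ge1$ be integers and $m=p+k$. There are $n$ data points $x_1,\dots,x_n$ and $p$ rules $h^{(1)},\dots,h^{(p)}$, each a map from $\{x_1,\dots,x_n\}$ to $\{1,\dots,k\}\cup\{?\}$, where ''?'' means abstain. Let $n_j\ge1$ be the number of indices $i$ with $h^{(j)}(x_i)\neq ?$. $\Delta_k$ denotes the probability simplex in $\mathbb{R}^k$; an element $z\in\Delta_k^n\subset\mathbb{R}^{nk}$ is written $z=(z_1,\dots,z_n)$ with $z_i=(z_{i1},\dots,z_{ik})\in\Delta_k$. For $j\le p$ let $h^{(j)}\in\{0,1\}^{nk}$ also denote the vector with $h^{(j)}_{i\ell}=1$ iff $h^{(j)}(x_i)=\ell$; for $\ell\le k$ let $\vec e^{\,n}_\ell\in\{0,1\}^{nk}$ have entries $(\vec e^{\,n}_\ell)_{i\ell'}=\mathbf 1(\ell'=\ell)$. The matrix $A\in\mathbb{R}^{m\times nk}$ has rows $a^{(j)}=h^{(j)}/n_j$ for $1\le j\le p$ and $a^{(p+\ell)}=\vec e^{\,n}_\ell/n$ for $1\le\ell\le k$. For $\theta\in\mathbb{R}^m$ put $a^{(\theta)}=A^\top\theta\in\mathbb{R}^{nk}$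 (entries $a^{(\theta)}_{i\ell}$) and define $g^{(\theta)}\in\Delta_k^n$ by $g^{(\theta)}_{i\ell}=\exp(a^{(\theta)}_{i\ell})/\sum_{\ell'=1}^k\exp(a^{(\theta)}_{i\ell'})$; let $\mathcal G=\{g^{(\theta)}:\theta\in\mathbb{R}^m\}$. A fixed ''true labeling'' $\eta\in\Delta_k^n$ is given and $b^*:=A\eta\in\mathbb{R}^m$. For $\mu,\nu\in\Delta_k^n$, $d(\mu,\nu)=\sum_{i=1}^n\mathrm{KL}(\mu_i\|\nu_i)=\sum_{i,\ell}\mu_{i\ell}\log(\mu_{i\ell}/\nu_{i\ell})$, with $0\log(0/x)=0$. One-coin Dawid–Skene (OCDS) prediction: for class frequencies $w\in\Delta_k$ and rule accuracies $b\in(0,1)^p$, $g^{ds}(w,b)\in\Delta_k^n$ is defined by $g^{ds}(w,b)_{i\ell}=\widehat g_{i\ell}/\sum_{\ell'}\widehat g_{i\ell'}$ where $\widehat g_{i\ell}=w_\ell\prod_{j:\,h^{(j)}(x_i)=\ell}b_j\prod_{j:\,h^{(j)}(x_i)\notin\{\ell,?\}}\frac{1-b_j}{k-1}$. $\mathcal G^\circ_{ds}=\{g^{ds}(w,b):\ w\in\Delta_k,\ 0<w_\ell<1\ \forall\ell,\ b\in(0,1)^p\}$. *)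

From HB Require Import structures.
From mathcomp Require Import all_boot all_order all_algebra.
From mathcomp Require Import all_classical all_reals all_analysis.
Set Implicit Arguments. Unset Strict Implicit. Unset Printing Implicit Defensive.
Import Order.TTheory GRing.Theory Num.Theory.
Import numFieldNormedType.Exports.
Local Open Scope classical_set_scope.
Local Open Scope ring_scope.

Section Defs.
Variables (R : realType) (n k p : nat).
(* rules: h j i = None means abstain, Some l means label l *)
Variable h : 'I_p -> 'I_n -> option 'I_k.

Definition nj (j : 'I_p) : nat := #|[set i : 'I_n | h j i != None]|.

(* rows of A, viewed as n x k matrices (entry (i,l) = index (i,l) of R^{nk}) *)
Definition arow (r : 'I_(p + k)) : 'M[R]_(n, k) :=
  match fintype.split r with
  | inl j => \matrix_(i < n, l < k) ((h j i == Some l)%:R / (nj j)%:R)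
  | inr l0 => \matrix_(i < n, l < k) ((l == l0)%:R / n%:R)
  end.

Definition atheta (theta : 'I_(p + k) -> R) : 'M[R]_(n, k) :=
  \sum_(r < p + k) theta r *: arow r.

Definition gtheta (theta : 'I_(p + k) -> R) : 'M[R]_(n, k) :=
  \matrix_(i < n, l < k)
    (expR (atheta theta i l) / \sum_(l' < k) expR (atheta theta i l')).

Definition Gset : set 'M[R]_(n, k) := range gtheta.

Definition simplex_n : set 'M[R]_(n, k) :=
  [set z | (forall i l, 0 <= z i l) /\ (forall i, \sum_(l < k) z i l = 1)].

Definition klterm (a b : R) : \bar R :=
  if a == 0 then 0%E else if b == 0 then +oo%E else (a * ln (a / b))%:E.

Definition dKL (mu nu : 'M[R]_(n, k)) : \bar R :=
  (\sum_(i < n) \sum_(l < k) klterm (mu i l) (nu i l))%E.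

Definition ghat (w : 'I_k -> R) (b : 'I_p -> R) (i : 'I_n) (l : 'I_k) : R :=
  w l * (\prod_(j < p | h j i == Some l) b j)
      * (\prod_(j < p | (h j i != Some l) && (h j i != None))
           ((1 - b j) / (k%:R - 1))).

Definition gds (w : 'I_k -> R) (b : 'I_p -> R) : 'M[R]_(n, k) :=
  \matrix_(i < n, l < k) (ghat w b i l / \sum_(l' < k) ghat w b i l').

Definition Gds_open : set 'M[R]_(n, k) :=
  [set g | exists (w : 'I_k -> R) (b : 'I_p -> R),
     [/\ \sum_(l < k) w l = 1, (forall l, 0 < w l < 1),
         (forall j, 0 < b j < 1) & g = gds w b]].

End Defs.

From HB Require Import structures.
From mathcomp Require Import all_boot all_order all_algebra.
From mathcomp Require Import all_classical all_reals all_analysis.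
From mathcomp Require Import ring.
Import Order.TTheory GRing.Theory Num.Theory.
Import numFieldNormedType.Exports.
Local Open Scope classical_set_scope.
Local Open Scope ring_scope.

Set Implicit Arguments.
Unset Strict Implicit.

(** Every one-coin Dawid-Skene prediction is itself a softmax prediction:
with [theta_j = n_j ln (b_j (k-1) / (1-b_j))] and [theta_(p+l) = n ln w_l],
the weights [1/n_j] and [1/n] in the rows of [A] cancel, and
[exp a^(theta)_il] equals the unnormalized [ghat_il] up to a positive factor
depending only on [i], which normalization removes.  Hence [d(eta, gstar)] is a
lower bound on the open OCDS family.  At a limit point [g] either [d(eta, g) = +oo], or
[g_il > 0] wherever [eta_il > 0]; then [d(eta, .)] is real-valued and
continuous near [g], and the lower bound passes to the limit. *)

Lemma closure_cvg_ge (R : realType) (T : topologicalType) (A : set T)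
    (f : T -> R) (x : T) (c : \bar R) :
  f y @[y --> x] --> f x -> (forall y, A y -> (c <= (f y)%:E)%E) ->
  closure A x -> (c <= (f x)%:E)%E.
Proof.
move=> fx_cvg Ac Ax; rewrite leNgt; apply/negP => fx_lt_c.
have [z [fx_lt_z zc]] : exists z, f x < z /\ (z%:E <= c)%E.
  move: fx_lt_c; case: c {Ac} => [r||] //=.
  - by rewrite lte_fin => ?; exists r.
  - by move=> _; exists (f x + 1); rewrite ltrDl ltr01 leey.
have [y [Ay fy_lt_z]] := Ax _ (cvgr_lt _ fx_cvg _ fx_lt_z).
by have := le_trans zc (Ac _ Ay); rewrite lee_fin leNgt fy_lt_z.
Qed.

Lemma normalize_scale (R : fieldType) (I : finType) (c : R) (x : I -> R) l :
  c != 0 -> (x l * c) / (\sum_i x i * c) = x l / \sum_i x i.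
Proof. by move=> c0; rewrite -mulr_suml invfM mulrACA mulfV ?mulr1. Qed.

Section SoftmaxModel.
Variables (R : realType) (n k p : nat) (h : 'I_p -> 'I_n -> option 'I_k).

Lemma athetaE (theta : 'I_(p + k) -> R) i l :
  atheta h theta i l =
  \sum_(j < p) theta (lshift k j) * ((h j i == Some l)%:R / (nj h j)%:R)
  + theta (rshift p l) / n%:R.
Proof.
rewrite /atheta summxE big_split_ord /=; congr (_ + _).
  apply: eq_bigr => j _; rewrite !mxE /arow.
  have -> : fintype.split (lshift k j) = inl j := unsplitK (inl _ j).
  by rewrite mxE.
rewrite (bigD1 l) //= big1 => [|l0 /negbTE l0l]; rewrite !mxE /arow.
  by have -> : fintype.split (rshift p l) = inr l := unsplitK (inr _ l);
    rewrite mxE eqxx mul1r addr0.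
have -> : fintype.split (rshift p l0) = inr l0 := unsplitK (inr _ l0).
by rewrite mxE eq_sym l0l mul0r mulr0.
Qed.

Lemma gtheta_gt0 (theta : 'I_(p + k) -> R) i l : 0 < gtheta h theta i l.
Proof.
rewrite mxE divr_gt0 ?expR_gt0 // (bigD1 l) //= ltr_pwDl ?expR_gt0 //.
by apply: sumr_ge0 => *; rewrite expR_ge0.
Qed.

Definition ocds_odds (b : 'I_p -> R) (j : 'I_p) : R := b j * (k%:R - 1) / (1 - b j).

Definition ocds_theta (w : 'I_k -> R) (b : 'I_p -> R) (r : 'I_(p + k)) : R :=
  match fintype.split r with
  | inl j => (nj h j)%:R * ln (ocds_odds b j)
  | inr l => n%:R * ln (w l)
  end.

Hypothesis n_gt0 : (0 < n)%N.
Hypothesis nj_gt0 : forall j, (0 < nj h j)%N.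

Lemma expR_atheta_ocds w b i l :
  0 < w l -> (forall j, 0 < ocds_odds b j) ->
  expR (atheta h (ocds_theta w b) i l) =
  w l * \prod_(j < p | h j i == Some l) ocds_odds b j.
Proof.
move=> wl_gt0 odds_gt0; rewrite athetaE expRD expR_sum.
rewrite [in RHS]big_mkcond [RHS]mulrC /=; congr (_ * _).
  apply: eq_bigr => j _; rewrite /ocds_theta.
  have -> : fintype.split (lshift k j) = inl j := unsplitK (inl _ j).
  have nj_neq0 : (nj h j)%:R != 0 :> R by rewrite pnatr_eq0 -lt0n nj_gt0.
  rewrite mulrCA mulrAC mulfV // mul1r.
  by case: (h j i == Some l); rewrite ?mul1r ?lnK ?posrE ?mul0r ?expR0.
rewrite /ocds_theta.
have -> : fintype.split (rshift p l) = inr l := unsplitK (inr _ l).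
have n_neq0 : n%:R != 0 :> R by rewrite pnatr_eq0 -lt0n.
by rewrite mulrAC mulfV // mul1r lnK ?posrE.
Qed.

Lemma ghat_ocds w b i l :
  (forall j, b j != 1) -> k%:R != 1 :> R ->
  ghat h w b i l = w l * (\prod_(j < p | h j i == Some l) ocds_odds b j)
    * \prod_(j < p | h j i != None) ((1 - b j) / (k%:R - 1)).
Proof.
move=> b_neq1 k_neq1; rewrite /ghat -!mulrA; congr (_ * _).
rewrite (big_mkcond (fun j => h j i == Some l)).
rewrite (big_mkcond (fun j => (h j i != Some l) && _)).
rewrite (big_mkcond (fun j => h j i == Some l)).
rewrite (big_mkcond (fun j => h j i != None)) -!big_split /=.
apply: eq_bigr => j _; case: (h j i) => [l1|] //=; rewrite andbT.
case: (Some l1 == Some l); rewrite ?mul1r ?mulr1 // /ocds_odds.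
by field; rewrite !subr_eq0 k_neq1 eq_sym b_neq1.
Qed.

Hypothesis k_gt1 : (1 < k)%N.

Lemma gds_in_Gset (w : 'I_k -> R) (b : 'I_p -> R) :
  (forall l, 0 < w l) -> (forall j, 0 < b j < 1) -> Gset (R:=R) h (gds h w b).
Proof.
move=> w_gt0 b01.
have b_neq1 j : b j != 1 by case/andP: (b01 j) => _; rewrite lt_neqAle => /andP[].
have k_neq1 : k%:R != 1 :> R by rewrite gt_eqF // ltr1n.
have k1_gt0 : 0 < k%:R - 1 :> R by rewrite subr_gt0 ltr1n.
have odds_gt0 j : 0 < ocds_odds b j.
  by case/andP: (b01 j) => ? ?; rewrite /ocds_odds divr_gt0 ?mulr_gt0 // subr_gt0.
exists (ocds_theta w b) => //; apply/matrixP => i l; rewrite !mxE.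
under eq_bigr do rewrite expR_atheta_ocds //.
under [X in _ = _ / X]eq_bigr do rewrite ghat_ocds //.
rewrite expR_atheta_ocds // ghat_ocds // normalize_scale //.
rewrite gt_eqF // prodr_gt0 // => j _.
by case/andP: (b01 j) => _ ?; rewrite divr_gt0 // subr_gt0.
Qed.

End SoftmaxModel.

Section KLDivergence.
Variables (R : realType) (n k : nat).
Implicit Types eta x : 'M[R]_(n, k).

Definition dKLr eta x : R := \sum_(i < n) \sum_(l < k)
  (if eta i l == 0 then 0 else eta i l * ln (eta i l / x i l)).

Lemma dKL_EFin eta x : (forall i l, eta i l != 0 -> x i l != 0) ->
  dKL eta x = (dKLr eta x)%:E.
Proof.
move=> supp; rewrite /dKL /dKLr -sumEFin; apply: eq_bigr => i _.
rewrite -sumEFin; apply: eq_bigr => l _; rewrite /klterm.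
by case: eqP => // /eqP etail; rewrite (negbTE (supp i l etail)).
Qed.

Lemma klterm_neqNy (a b : R) : klterm a b != -oo%E.
Proof. by rewrite /klterm; case: ifP => //; case: ifP. Qed.

Lemma dKL_eqy eta x i l : eta i l != 0 -> x i l = 0 -> dKL eta x = +oo%E.
Proof.
move=> etail xil; apply/esum_eqyP.
  move=> i' _; rewrite esum_eqNy; apply/negP => /existsP[l' /andP[_]].
  by rewrite (negbTE (klterm_neqNy _ _)).
exists i; split => //; apply/esum_eqyP => [*|]; first exact: klterm_neqNy.
by exists l; split => //; rewrite /klterm (negbTE etail) xil eqxx.
Qed.

Lemma dKLr_cvg eta x : (forall i l, 0 <= eta i l) ->
  (forall i l, eta i l != 0 -> 0 < x i l) ->
  dKLr eta y @[y --> x] --> dKLr eta x.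
Proof.
move=> eta_ge0 supp; apply: (cvg_big (F := nbhs x) add_continuous) => // i _.
apply: (cvg_big (F := nbhs x) add_continuous) => // l _.
have [_|etail] := eqVneq (eta i l) 0; first exact: cvg_cst.
have etail_gt0 : 0 < eta i l by rewrite lt0r etail eta_ge0.
apply: cvgMr; apply: (continuous_cvg _ (continuous_ln _)).
  exact: divr_gt0 etail_gt0 (supp i l etail).
by apply: cvgMr; apply: cvgV; [rewrite gt_eqF ?supp|exact: coord_continuous].
Qed.

End KLDivergence.

Theorem mainTheorem16 (R : realType) (n k p : nat)
  (hn : (1 <= n)%N) (hk : (2 <= k)%N) (hp : (1 <= p)%N)
  (h : 'I_p -> 'I_n -> option 'I_k)
  (hnj : forall j : 'I_p, (1 <= nj h j)%N)
  (eta : 'M[R]_(n, k)) (heta : simplex_n eta)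
  (gstar : 'M[R]_(n, k)) (hgstar : Gset (R:=R) h gstar)
  (hmin : forall g, Gset (R:=R) h g -> (dKL eta gstar <= dKL eta g)%E)
  (g : 'M[R]_(n, k))
  (hg : (closure (Gds_open (R:=R) h) `&` simplex_n (R:=R) (n:=n) (k:=k)) g) :
  (dKL eta gstar <= dKL eta g)%E.
Proof.
case: hg => g_cl [g_ge0 _]; case: heta => [eta_ge0 _].
have [|no_zero] := boolP [exists i, exists l, (eta i l != 0) && (g i l == 0)].
  case/existsP=> i /existsP[l /andP[etail /eqP gil]].
  by rewrite (dKL_eqy etail gil) leey.
have supp i l : eta i l != 0 -> g i l != 0.
  move=> etail; apply: contraNN no_zero => /eqP gil.
  by apply/existsP; exists i; apply/existsP; exists l; rewrite etail gil eqxx.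
rewrite (dKL_EFin supp); apply: (closure_cvg_ge _ _ g_cl).
  by apply: dKLr_cvg => // i l etail; rewrite lt0r supp ?g_ge0.
move=> _ [w [b [_ w01 b01 ->]]].
have w_gt0 l : 0 < w l by case/andP: (w01 l).
have [theta _ <-] := gds_in_Gset hn hnj hk w_gt0 b01.
rewrite -dKL_EFin => [|i l _]; last by rewrite gt_eqF ?gtheta_gt0.
by apply: hmin; exists theta.
Qed.
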